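(* Let $\Gamma$ be a Deza graph with parameters $(n,k,k-1,a)$, $k>1$, $\beta=1$. For an $NA$-vertex $x$, $(x')_b=(x_b)'$.
   Context: A Deza graph with parameters $(n,k,b,a)$, $a\le b$, is a $k$-regular graph on $n$ vertices in which any two distinct vertices have $a$ or $b$ common neighbours; $\beta$ is the number of vertices $u\ne v$ with exactly $b$ common neighbours with a given vertex $v$. Since $\beta=1$, for each vertex $x$ let $x_b$ denote the unique vertex having $b=k-1$ common neighbours with $x$. A vertex $x$ is an $A$-vertex if $x$ is adjacent to $x_b$, and an $NA$-vertex otherwise (if $x$ is $NA$ then so is $x_b$). For an $NA$-vertex $x$, $x'$ denotes the unique neighbour of $x$ not adjacent to $x_b$. *)

From mathcomp Require Import all_boot.
Set Implicit Arguments. Unset Strict Implicit. Unset Printing Implicit Defensive.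

Definition simple_graph (T : finType) (e : rel T) : Prop :=
  symmetric e /\ irreflexive e.

Definition ncommon (T : finType) (e : rel T) (x y : T) : nat :=
  #|[set z | e x z && e y z]|.

Definition deza_graph (T : finType) (e : rel T) (n k b a : nat) : Prop :=
  [/\ simple_graph e, #|T| = n, a <= b,
      (forall x : T, #|[set y | e x y]| = k) &
      (forall x y : T, x != y -> ncommon e x y = a \/ ncommon e x y = b)].

Definition beta_of (T : finType) (e : rel T) (b : nat) (v : T) : nat :=
  #|[set u | (u != v) && (ncommon e v u == b)]|.

(* y is the vertex x_b (the vertex having b common neighbours with x) *)
Definition b_partner (T : finType) (e : rel T) (b : nat) (x y : T) : Prop :=
  x != y /\ ncommon e x y = b.

From mathcomp Require Import all_boot zify.
Set Implicit Arguments. Unset Strict Implicit. Unset Printing Implicit Defensive.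

(* The map v |-> v_b is an involution B of the vertices, and A^2 = aJ + (k-a)I + (b-a)B
   for the adjacency matrix A.  Since A commutes with A^2 and J, it commutes with B:
   u ~ v_b iff u_b ~ v.  Applied to u = x', v = x_b this puts (x')_b among the
   neighbours of x_b that are not neighbours of x; as x and x_b share k-1 neighbours,
   there is only one such vertex, namely (x_b)'. *)

Section CommonNeighbours.

Variables (T : finType) (e : rel T).

Lemma ncommonC x y : ncommon e x y = ncommon e y x.
Proof. by apply: eq_card => z; rewrite !inE andbC. Qed.

Lemma ncommon_sum x y : ncommon e x y = \sum_z (e x z && e y z).
Proof. by rewrite /ncommon -sum1_card big_mkcond; apply: eq_bigr => z _; rewrite inE. Qed.

Lemma ncommon_diag x : ncommon e x x = #|[set y | e x y]|.
Proof. by apply: eq_card => z; rewrite !inE andbb. Qed.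

Lemma ncommon_le x y : ncommon e x y <= #|[set z | e x z]|.
Proof. by apply/subset_leq_card/subsetP => z; rewrite !inE => /andP[]. Qed.

Lemma card_nbhD x y :
  #|[set z | e y z] :\: [set z | e x z]| = #|[set z | e y z]| - ncommon e x y.
Proof.
have := cardsID [set z | e x z] [set z | e y z].
have -> : #|[set z | e y z] :&: [set z | e x z]| = ncommon e x y.
  by apply: eq_card => z; rewrite !inE andbC.
by lia.
Qed.

Lemma b_partner_sym b x y : b_partner e b x y -> b_partner e b y x.
Proof. by case=> xy cxy; split; rewrite 1?eq_sym // ncommonC. Qed.

Hypothesis esym : symmetric e.

(* Both sides count the walks of length 3 between u and v. *)
Lemma sum_adj_ncommonC u v :
  \sum_w e u w * ncommon e w v = \sum_w e v w * ncommon e w u.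
Proof.
have walks s t : \sum_w e s w * ncommon e w t
    = \sum_w \sum_z (e s w && e w z && e t z : nat).
  apply: eq_bigr => w _; rewrite ncommon_sum big_distrr /=.
  by apply: eq_bigr => z _; case: (e s w); rewrite ?mul1n ?mul0n.
rewrite !walks [RHS]exchange_big; apply: eq_bigr => w _; apply: eq_bigr => z _.
by rewrite (esym z w); case: (e u w); case: (e w z); case: (e v z).
Qed.

End CommonNeighbours.

Section DezaUniquePartner.

Variables (T : finType) (e : rel T) (k b a : nat).

Hypotheses (esym : symmetric e) (eirr : irreflexive e)
  (hdeg : forall x, #|[set y | e x y]| = k) (hab : a <= b)
  (hcommon : forall x y, x != y -> ncommon e x y = a \/ ncommon e x y = b)
  (hbeta : forall v, beta_of e b v = 1).

Lemma b_partnerP v y :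
  reflect (b_partner e b v y) (y \in [set u | (u != v) && (ncommon e v u == b)]).
Proof.
by rewrite inE eq_sym; apply: (iffP andP) => -[vy /eqP cvy].
Qed.

Lemma b_partner_exists v : exists y, b_partner e b v y.
Proof.
have /eqP/cards1P[y hy] := hbeta v.
by exists y; apply/b_partnerP; rewrite hy set11.
Qed.

Lemma b_partner_uniq v y z : b_partner e b v y -> b_partner e b v z -> y = z.
Proof.
have /eqP/cards1P[u hu] := hbeta v.
move=> /b_partnerP + /b_partnerP; rewrite hu !inE.
by move=> /eqP -> /eqP ->.
Qed.

(* If a = b, every neighbour of x would be a partner of x. *)
Lemma ltn_ab (x : T) : 1 < k -> a < b.
Proof.
move=> hk; rewrite ltn_neqAle hab andbT; apply/eqP => eq_ab.
have : [set y | e x y] \subset [set u | (u != x) && (ncommon e x u == b)].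
  apply/subsetP => y; rewrite inE => exy; apply/b_partnerP.
  have xy : x != y by apply: contraTneq exy => <-; rewrite eirr.
  by split=> //; case: (hcommon xy) => ->.
by move/subset_leq_card; rewrite hdeg -/(beta_of e b x) hbeta; lia.
Qed.

Lemma ncommon_b_partnerE v pv w : b_partner e b v pv ->
  ncommon e w v = a + (k - a) * (w == v) + (b - a) * (w == pv).
Proof.
move=> hp; have [vpv cvpv] := hp.
have bk : b <= k by rewrite -cvpv -(hdeg v) ncommon_le.
have [->|wv] := eqVneq w v; first by rewrite ncommon_diag hdeg (negbTE vpv); lia.
have [->|wpv] := eqVneq w pv; first by rewrite ncommonC cvpv; lia.
rewrite !muln0 !addn0; case: (hcommon wv) => // cwv.
have : b_partner e b v w by apply: b_partner_sym.
by move/(b_partner_uniq hp)/eqP; rewrite eq_sym (negbTE wpv).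
Qed.

Lemma sum_adj_ncommon_b_partner u v pv : b_partner e b v pv ->
  \sum_w e u w * ncommon e w v = a * k + (k - a) * e u v + (b - a) * e u pv.
Proof.
move=> hp.
have pick c y : \sum_w e u w * (c * (w == y)) = c * e u y.
  rewrite (bigD1 y) //= eqxx muln1 big1 => [|w /negbTE ->]; last by rewrite !muln0.
  by rewrite addn0 mulnC.
under eq_bigr => w _ do rewrite (ncommon_b_partnerE w hp) !mulnDr.
rewrite !big_split /= -big_distrl !pick /= mulnC; congr (_ * _ + _ + _).
by rewrite -(hdeg u) -sum1_card [RHS]big_mkcond; apply: eq_bigr => w _; rewrite inE.
Qed.

Lemma adj_b_partnerC u v pu pv : a < b ->
  b_partner e b u pu -> b_partner e b v pv -> e u pv = e pu v.
Proof.
move=> ltab hu hv; have := sum_adj_ncommonC esym u v.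
rewrite (sum_adj_ncommon_b_partner u hv) (sum_adj_ncommon_b_partner v hu).
rewrite (esym v u) (esym v pu).
by case: (e u v); case: (e u pv); case: (e pu v) => //=; lia.
Qed.

End DezaUniquePartner.

Theorem lemma12 (T : finType) (e : rel T) (n k a : nat)
  (hD : deza_graph e n k k.-1 a) (hk : 1 < k)
  (hbeta : forall v : T, beta_of e k.-1 v = 1)
  (x xb xbb x' xb' : T) :
  b_partner e k.-1 x xb -> ~~ e x xb ->
  e x x' -> ~~ e x' xb ->
  b_partner e k.-1 xb xbb ->
  e xb xb' -> ~~ e xb' xbb ->
  b_partner e k.-1 x' xb'.
Proof.
case: hD => [[esym eirr] _ hab hdeg hcommon] hx _ exx' ex'xb hxb exbxb' exb'xbb.
have ltab := ltn_ab eirr hdeg hab hcommon hbeta x hk.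
have commB := adj_b_partnerC esym hdeg hab hcommon hbeta ltab.
have xbbE : xbb = x by apply: (b_partner_uniq hbeta hxb); apply: b_partner_sym.
subst xbb.
have [q hq] := b_partner_exists hbeta x'.
have /cards1P[z hz] : #|[set y | e xb y] :\: [set y | e x y]| == 1.
  by rewrite card_nbhD hdeg; case: hx => _ ->; apply/eqP; lia.
have : q \in [set y | e xb y] :\: [set y | e x y].
  rewrite !inE (commB _ _ _ _ hx hq) (commB _ _ _ _ (b_partner_sym hx) hq).
  by rewrite (esym xb) ex'xb exx'.
have : xb' \in [set y | e xb y] :\: [set y | e x y].
  by rewrite !inE exbxb' esym exb'xbb.
by rewrite hz !inE => /eqP -> /eqP <-.
Qed.
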